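(* Let $p\ge 7$ be a prime. Then $$\sum_{k=1}^{p-1}\frac{H_k^2}{k^2}\equiv 0,\qquad \sum_{k=1}^{p-1}\frac{H_k H_{k,2}}{k}\equiv 0,\qquad \sum_{k=1}^{p-1}\frac{H_k^3}{k}\equiv 0\pmod{p}.$$
   Context: For positive integers $n,m$, $H_{n,m}=\sum_{k=1}^n 1/k^m$ and $H_n=H_{n,1}$. Congruences modulo $p$ are taken in the ring of rationals with denominators not divisible by $p$. *)

From HB Require Import structures.
From mathcomp Require Import all_boot all_order all_algebra.
Set Implicit Arguments. Unset Strict Implicit. Unset Printing Implicit Defensive.
Import Order.TTheory GRing.Theory Num.Theory.
Local Open Scope ring_scope.

Definition Hgen (n m : nat) : rat := \sum_(1 <= k < n.+1) (k%:R ^+ m)^-1.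
Definition H (n : nat) : rat := Hgen n 1.

Definition p_integral (p : nat) (x : rat) : bool := ~~ (p %| denq x)%Z.

Definition cong_rat (p : nat) (x y : rat) : Prop :=
  p_integral p x /\ p_integral p y /\
  exists z : rat, p_integral p z /\ x - y = p%:R * z.

From HB Require Import structures.
From mathcomp Require Import all_boot all_order all_algebra.
From mathcomp Require Import zify ring.
Set Implicit Arguments. Unset Strict Implicit. Unset Printing Implicit Defensive.
Import Order.TTheory GRing.Theory Num.Theory.
Local Open Scope ring_scope.

(* The computation is carried out in an arbitrary field F of characteristic p
   (in the end F = 'F_p), writing H_{k,m} for sum_{j<=k} 1/j^m computed in F.
   1. Power sums: H_{p-1,m} = 0 for 1 <= m <= 4, because multiplication by a
      unit c with c^m != 1 permutes the nonzero residues.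
   2. Reflection k |-> p - k gives H_{p-1-k,m} = (-1)^(m+1) H_{k,m}, whence the
      depth-two sums sum_k H_{k,m}/k^(4-m) vanish (m = 1, 2, 3).
   3. Duality: with the binomial transform (BT f)(k) = sum_j (-1)^(j-1) C(k,j) f(j)
      and the weighted partial sums (P f)(k) = sum_{j<=k} f(j)/j, one has
      BT(f/k) = P(BT f), BT(P f) = (BT f)/k and, since C(p-1,j) = (-1)^j,
      (BT f)(p-1) = - sum_k f(k).  Applied to u = P(H_1) this shows
      sum_k u_k/k^2 = - sum_k H_{k,3}/k = 0, and since 2u_k = H_k^2 + H_{k,2}
      we get sum_k H_k^2/k^2 = 0.
   4. Telescoping H_k^2 H_{k,2} and H_k^4 over 0 <= k <= p-1 then yields
      sum_k H_k H_{k,2}/k = 0 and sum_k H_k^3/k = 0.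
   5. Finally p-integral rationals are reduced into F through the relation
      [residue x y], which is compatible with the field operations; a rational
      with residue 0 is congruent to 0 mod p. *)

Section HarmonicNumbers.
Variable F : fieldType.

(* 1/k in F (with 1/0 = 0) and the harmonic numbers H_{k,m} = sum_{j<=k} 1/j^m in F. *)
Definition recip (k : nat) : F := k%:R^-1.
Definition Hs (m k : nat) : F := \sum_(i < k) recip i.+1 ^+ m.

Lemma Hs0 m : Hs m 0 = 0.
Proof. by rewrite /Hs big_ord0. Qed.

Lemma HsS m k : Hs m k.+1 = Hs m k + recip k.+1 ^+ m.
Proof. by rewrite /Hs big_ord_recr. Qed.

Definition btrans (f : nat -> F) k := \sum_(i < k) (-1) ^+ i * 'C(k, i.+1)%:R * f i.+1.
Definition psum (f : nat -> F) k := \sum_(i < k) f i.+1 * recip i.+1.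

(* Pascal's rule for the binomial transform. *)
Lemma btransS (f : nat -> F) m :
  btrans f m.+1 = btrans f m + \sum_(i < m.+1) (-1) ^+ i * 'C(m, i)%:R * f i.+1.
Proof.
rewrite /btrans (eq_bigr (fun i : 'I_m.+1 => (-1) ^+ i * 'C(m, i.+1)%:R * f i.+1
  + (-1) ^+ i * 'C(m, i)%:R * f i.+1)) => [|i _]; last by rewrite binS natrD; ring.
by rewrite big_split /= big_ord_recr /= bin_small // mulr0 mul0r addr0.
Qed.

Lemma alt_binomial_sum (f : nat -> F) m :
  \sum_(i < m.+1) (-1) ^+ i * 'C(m, i)%:R * f i = f 0%N - btrans f m.
Proof.
rewrite big_ord_recl expr0 bin0 !mul1r /btrans -sumrN.
by congr (_ + _); apply: eq_bigr => i _; rewrite /bump /= exprS; ring.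
Qed.

Lemma btrans_one m : btrans (fun _ => 1) m.+1 = 1.
Proof.
elim: m => [|m IH]; first by rewrite /btrans big_ord1 bin1 expr0 !mul1r.
by rewrite btransS (alt_binomial_sum (fun _ => 1)) IH subrr addr0.
Qed.

Lemma btrans_ext (f g : nat -> F) k :
  (forall i, (i < k)%N -> f i.+1 = g i.+1) -> btrans f k = btrans g k.
Proof. by move=> fg; apply: eq_bigr => i _; rewrite fg. Qed.

Lemma psum_ext (f g : nat -> F) k :
  (forall i, (i < k)%N -> f i.+1 = g i.+1) -> psum f k = psum g k.
Proof. by move=> fg; apply: eq_bigr => i _; rewrite fg. Qed.

Lemma psumS (f : nat -> F) k : psum f k.+1 = psum f k + f k.+1 * recip k.+1.
Proof. by rewrite /psum big_ord_recr. Qed.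

Lemma psum_Hs1 k : 2%:R * psum (Hs 1) k = Hs 1 k ^+ 2 + Hs 2 k.
Proof.
elim: k => [|k IH]; first by rewrite /psum big_ord0 !Hs0 mulr0 expr0n add0r.
by rewrite psumS !HsS mulrDr IH; ring.
Qed.

Section CharacteristicP.
Variable n : nat.
Hypothesis pcharF : n.+1 \in [pchar F].
Hypothesis n_ge6 : (6 <= n)%N.

Lemma natr_eq0_pchar k : (k%:R == 0 :> F) = (n.+1 %| k)%N.
Proof. by rewrite (dvdn_pcharf pcharF). Qed.

Lemma natr_pchar : n.+1%:R = 0 :> F.
Proof. by apply/eqP; rewrite natr_eq0_pchar. Qed.

Lemma natr_m1 : n%:R = -1 :> F.
Proof. by apply/eqP; rewrite -subr_eq0 opprK natr1 natr_pchar. Qed.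

Lemma natr_neq0 k : (0 < k <= n)%N -> k%:R != 0 :> F.
Proof.
by case/andP=> k_gt0 le_kn; rewrite natr_eq0_pchar; apply/negP => /(dvdn_leq k_gt0); lia.
Qed.

Lemma two_neq0 : 2%:R != 0 :> F.
Proof. by rewrite natr_neq0 //; lia. Qed.

Lemma natr_inj_lt i j : (i < n.+1)%N -> (j < n.+1)%N -> i%:R = j%:R :> F -> i = j.
Proof.
wlog le_ij : i j / (i <= j)%N => [W hi hj e|hi hj e].
  by case: (leqP i j) => [/W|/ltnW /W W']; [apply|symmetry; apply: W'].
have : (n.+1 %| j - i)%N by rewrite -natr_eq0_pchar natrB // e subrr.
by case: (posnP (j - i)) => [|/dvdn_leq h /h]; lia.
Qed.

(* Vanishing of power sums: multiplication by c permutes the residues mod p,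
   so H_{p-1,m} = c^-m H_{p-1,m}; hence H_{p-1,m} = 0 as soon as c^m != 1. *)
Lemma power_sum_eq0 m c : (0 < c <= n)%N -> c%:R ^+ m != 1 :> F -> Hs m n = 0.
Proof.
move=> hc cm_neq1; have m_gt0 : (0 < m)%N by case: m cm_neq1; rewrite ?expr0 ?eqxx.
have -> : Hs m n = \sum_(i < n.+1) recip i ^+ m.
  by rewrite big_ord_recl /recip invr0 expr0n gtn_eqF // add0r.
set S := \sum_(i < n.+1) _.
have natr_mod k : (k %% n.+1)%:R = k%:R :> F.
  by rewrite {2}(divn_eq k n.+1) natrD natrM natr_pchar mulr0 add0r.
pose mulc (i : 'I_n.+1) : 'I_n.+1 := Ordinal (ltn_pmod (c * i) (ltn0Sn n)).
have mulc_inj : injective mulc.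
  move=> i j /(congr1 (fun k : 'I_n.+1 => (val k)%:R : F)) /=.
  rewrite !natr_mod !natrM => /(mulfI (natr_neq0 hc)) e.
  exact/val_inj/(natr_inj_lt (ltn_ord i) (ltn_ord j)).
have S_scaled : S = recip c ^+ m * S.
  rewrite {1}/S (reindex_inj mulc_inj) /= mulr_sumr; apply: eq_bigr => i _.
  by rewrite /recip natr_mod natrM invfM exprMn.
have /eqP : (1 - recip c ^+ m) * S = 0 by rewrite mulrBl mul1r -S_scaled subrr.
rewrite mulf_eq0 subr_eq0 /recip exprVn eq_sym invr_eq1 (negbTE cm_neq1) /=.
by move/eqP.
Qed.

(* H_{p-1,m} = 0 for 1 <= m <= 4: take c = -1 for odd m and c = 2 for m = 2, 4
   (2^2 - 1 = 3 and 2^4 - 1 = 3 * 5 are prime to p >= 7). *)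
Lemma Hs_full_eq0 m : (0 < m <= 4)%N -> Hs m n = 0.
Proof.
case/andP=> m_gt0 m_le4; have [odd_m|even_m] := boolP (odd m).
  apply: (@power_sum_eq0 m n); first by rewrite leqnn andbT; lia.
  rewrite natr_m1 -signr_odd odd_m expr1 -subr_eq0 -opprD oppr_eq0 -mulr2n.
  exact: two_neq0.
apply: (@power_sum_eq0 m 2); first lia.
rewrite -natrX; suff : (2 ^ m - 1)%N%:R != 0 :> F by rewrite natrB ?expn_gt0 // subr_eq0.
case: m m_gt0 m_le4 even_m => [|[|[|[|[|]]]]] // _ _ _.
  by rewrite natr_neq0 //; lia.
by rewrite (_ : (2 ^ 4 - 1 = 3 * 5)%N) // natrM mulf_neq0 // natr_neq0 //; lia.
Qed.

Lemma recip_reflect i : (i <= n)%N -> recip (n - i) = - recip i.+1.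
Proof. by move=> le_in; rewrite /recip -subSS natrB // natr_pchar sub0r invrN. Qed.

Lemma sum_reflect (f : nat -> F) : \sum_(i < n) f i.+1 = \sum_(i < n) f (n - i)%N.
Proof. by rewrite (reindex_inj rev_ord_inj); apply: eq_bigr => i _; rewrite subnSK. Qed.

Lemma Hs_reflect m k : Hs m n = 0 -> (k <= n)%N ->
  Hs m (n - k) = (-1) ^+ m.+1 * Hs m k.
Proof.
move=> Hs_n; elim: k => [|k IH] lt_kn; first by rewrite subn0 Hs_n Hs0 mulr0.
have : Hs m (n - k) = Hs m (n - k.+1) + recip (n - k) ^+ m.
  by rewrite -(subnSK lt_kn) HsS.
have le_kn := ltnW lt_kn.
rewrite (IH le_kn) (recip_reflect le_kn) HsS (exprNn (recip k.+1)).
move=> /esym /(canRL (addrK _)) ->.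
by rewrite exprS; ring.
Qed.

(* The same reflection, in the form used with sums indexed by k = i + 1. *)
Lemma Hs_reflect_succ m i : Hs m n = 0 -> (i < n)%N ->
  Hs m (n - i) = (-1) ^+ m.+1 * (Hs m i.+1 - recip i.+1 ^+ m).
Proof. by move=> Hs_n lt_in; rewrite (Hs_reflect Hs_n (ltnW lt_in)) HsS addrK. Qed.

(* F does not have characteristic 2. *)
Lemma half_eq0 (x : F) : x = - x -> x = 0.
Proof.
move=> x_opp; apply/eqP.
have /eqP : x * 2%:R = 0 by rewrite mulr_natr mulr2n {1}x_opp addNr.
by rewrite mulf_eq0 (negbTE two_neq0) orbF.
Qed.

(* Depth-two sums of even weight w = m + r:  sum_k H_{k,m}/k^r = 0 whenever
   H_{p-1,m} = H_{p-1,w} = 0, since the reflection k |-> p - k maps the sum S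
   to H_{p-1,w} - S. *)
Lemma reflected_sum_eq0 m r : ~~ odd (m + r) -> Hs m n = 0 -> Hs (m + r) n = 0 ->
  \sum_(i < n) Hs m i.+1 * recip i.+1 ^+ r = 0.
Proof.
move=> even_w Hs_m Hs_w; set S := \sum_(i < n) _.
have sign : (-1) ^+ m.+1 * (-1) ^+ r = -1 :> F.
  by rewrite -exprD addSn exprS -signr_odd (negbTE even_w) expr0 mulr1.
apply: half_eq0; rewrite -[RHS]addr0 -[X in _ + X]Hs_w.
rewrite {1}/S (sum_reflect (fun k => Hs m k * recip k ^+ r)) -sumrN -big_split.
apply: eq_bigr => i _ /=.
have lt_in := ltn_ord i.
rewrite (Hs_reflect_succ Hs_m lt_in) (recip_reflect (ltnW lt_in)) (exprNn (recip i.+1)) exprD.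
transitivity ((-1) ^+ m.+1 * (-1) ^+ r * (Hs m i.+1 - recip i.+1 ^+ m) * recip i.+1 ^+ r).
  by ring.
by rewrite sign; ring.
Qed.

Lemma binomial_recip m i : (m < n)%N -> (i <= m)%N ->
  'C(m, i)%:R * recip i.+1 = 'C(m.+1, i.+1)%:R * recip m.+1.
Proof.
move=> lt_mn le_im; rewrite /recip; apply/eqP.
have i1_neq0 : i.+1%:R != 0 :> F by rewrite natr_neq0 //; lia.
have m1_neq0 : m.+1%:R != 0 :> F by rewrite natr_neq0 //; lia.
rewrite eqr_div; [|exact: i1_neq0|exact: m1_neq0].
have /(congr1 (fun k => k%:R : F)) := mul_bin_diag m.+1 i.
by rewrite /= !natrM mulrC => ->; rewrite mulrC.
Qed.

Lemma btrans_mul_recip f m : (m <= n)%N ->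
  btrans (fun k => f k * recip k) m = psum (btrans f) m.
Proof.
elim: m => [|m IH] le_mn; first by rewrite /btrans /psum !big_ord0.
rewrite btransS (IH (ltnW le_mn)) psumS; congr (_ + _).
rewrite /btrans mulr_suml; apply: eq_bigr => i _.
have le_im : (i <= m)%N by rewrite -ltnS.
transitivity ((-1) ^+ i * ('C(m, i)%:R * recip i.+1) * f i.+1); first by ring.
by rewrite (binomial_recip le_mn le_im); ring.
Qed.

Lemma btrans_psum f m : (m < n)%N -> btrans (psum f) m.+1 = btrans f m.+1 * recip m.+1.
Proof.
move=> lt_mn.
have -> : btrans f m.+1 * recip m.+1 =
    \sum_(i < m.+1) (-1) ^+ i * 'C(m, i)%:R * (psum f i.+1 - psum f i).
  rewrite /btrans mulr_suml; apply: eq_bigr => i _; rewrite psumS addrC addKr.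
  have le_im : (i <= m)%N by rewrite -ltnS.
  transitivity ((-1) ^+ i * ('C(m.+1, i.+1)%:R * recip m.+1) * f i.+1); first by ring.
  by rewrite -(binomial_recip lt_mn le_im); ring.
rewrite btransS (eq_bigr _ (fun i _ => mulrBr _ _ _)) sumrB alt_binomial_sum.
by rewrite /psum big_ord0 sub0r opprK addrC.
Qed.

Lemma binomial_top k : (k <= n)%N -> 'C(n, k)%:R = (-1) ^+ k :> F.
Proof.
elim: k => [|k IH] lt_kn; first by rewrite bin0 expr0.
have /eqP : 'C(n.+1, k.+1)%:R = 0 :> F.
  by apply/eqP; rewrite natr_eq0_pchar prime_dvd_bin ?(pcharf_prime pcharF) //; lia.
by rewrite binS natrD (IH (ltnW lt_kn)) addr_eq0 => /eqP ->; rewrite exprS mulN1r.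
Qed.

Lemma btrans_top f : btrans f n = - \sum_(i < n) f i.+1.
Proof.
rewrite /btrans -sumrN; apply: eq_bigr => i _.
rewrite (binomial_top (ltn_ord i)) exprS -signr_odd.
by case: (odd i); rewrite ?expr0 ?expr1; ring.
Qed.

Lemma sum_Hs_recip_eq0 m r : (0 < m)%N -> (m + r = 4)%N ->
  \sum_(i < n) Hs m i.+1 * recip i.+1 ^+ r = 0.
Proof.
move=> m_gt0 w4; apply: reflected_sum_eq0; first by rewrite w4.
  by apply: Hs_full_eq0; lia.
by rewrite w4 Hs_full_eq0.
Qed.

Lemma btrans_Hs1 m : (m < n)%N -> btrans (Hs 1) m.+1 = recip m.+1.
Proof.
move=> lt_mn; rewrite (@btrans_ext _ (psum (fun _ => 1))) => [|i _].
  by rewrite (btrans_psum _ lt_mn) btrans_one mul1r.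
by apply: eq_bigr => j _; rewrite mul1r.
Qed.

Lemma btrans_psum_Hs1 m : (m < n)%N -> btrans (psum (Hs 1)) m.+1 = recip m.+1 ^+ 2.
Proof. by move=> lt_mn; rewrite (btrans_psum _ lt_mn) (btrans_Hs1 lt_mn). Qed.

Lemma btrans_psum_Hs1_recip m : (m <= n)%N ->
  btrans (fun k => psum (Hs 1) k * recip k) m = Hs 3 m.
Proof.
move=> le_mn; rewrite (btrans_mul_recip _ le_mn); apply: eq_bigr => i _.
by rewrite btrans_psum_Hs1 -?exprSr //; apply: leq_trans le_mn.
Qed.

(* The duality step: sum_k u_k/k^2 is, up to sign, the binomial transform at
   p - 1 of u_k/k^2, which unwinds to sum_k H_{k,3}/k = 0. *)
Lemma sum_psum_Hs1_recip2 : \sum_(i < n) psum (Hs 1) i.+1 * recip i.+1 ^+ 2 = 0.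
Proof.
pose g k := psum (Hs 1) k * recip k * recip k.
apply/eqP; rewrite -oppr_eq0 (eq_bigr (fun i : 'I_n => g i.+1)) => [|i _]; last first.
  by rewrite /g -mulrA -expr2.
rewrite -btrans_top (btrans_mul_recip _ (leqnn n)).
rewrite (@psum_ext _ (Hs 3)) => [|i lt_in]; last by rewrite btrans_psum_Hs1_recip.
rewrite -(sum_Hs_recip_eq0 (m := 3) (r := 1) erefl erefl).
by apply/eqP; apply: eq_bigr => i _; rewrite expr1.
Qed.

(* sum_k H_k^2/k^2 = 0, using H_k^2 = 2u_k - H_{k,2}. *)
Lemma sum_Hs1_sq_recip_sq : \sum_(i < n) Hs 1 i.+1 ^+ 2 * recip i.+1 ^+ 2 = 0.
Proof.
have -> : \sum_(i < n) Hs 1 i.+1 ^+ 2 * recip i.+1 ^+ 2 =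
    2%:R * \sum_(i < n) psum (Hs 1) i.+1 * recip i.+1 ^+ 2
    - \sum_(i < n) Hs 2 i.+1 * recip i.+1 ^+ 2.
  by rewrite mulr_sumr -sumrB; apply: eq_bigr => i _; rewrite mulrA psum_Hs1; ring.
by rewrite sum_psum_Hs1_recip2 (sum_Hs_recip_eq0 (m := 2) (r := 2) erefl erefl) mulr0 subrr.
Qed.

Lemma sum_increments_eq0 (g : nat -> F) : g n = 0 -> g 0%N = 0 ->
  \sum_(i < n) (g i.+1 - g i) = 0.
Proof.
move=> gn g0; rewrite -(big_mkord xpredT (fun i => g i.+1 - g i)).
by rewrite telescope_sumr // gn g0 subrr.
Qed.

(* sum_k H_k H_{k,2}/k = 0, by telescoping g(k) = H_k^2 H_{k,2}. *)
Lemma sum_Hs1_Hs2_recip : \sum_(i < n) Hs 1 i.+1 * Hs 2 i.+1 * recip i.+1 = 0.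
Proof.
have := @sum_increments_eq0 (fun k => Hs 1 k ^+ 2 * Hs 2 k).
rewrite /= (Hs_full_eq0 (m := 1) erefl) Hs0 exprS !mul0r => /(_ erefl erefl).
rewrite (eq_bigr (fun i : 'I_n => 2%:R * (Hs 1 i.+1 * Hs 2 i.+1 * recip i.+1)
   + (Hs 1 i.+1 ^+ 2 * recip i.+1 ^+ 2 - Hs 2 i.+1 * recip i.+1 ^+ 2)
   - 2%:R * (Hs 1 i.+1 * recip i.+1 ^+ 3) + recip i.+1 ^+ 4)) => [|i _]; last first.
  by rewrite !HsS; ring.
rewrite !big_split /= !sumrN -!mulr_sumr sum_Hs1_sq_recip_sq.
rewrite (sum_Hs_recip_eq0 (m := 2) (r := 2) erefl erefl).
rewrite (sum_Hs_recip_eq0 (m := 1) (r := 3) erefl erefl).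
rewrite -[\sum_(i < n) _ ^+ 4]/(Hs 4 n) (Hs_full_eq0 (m := 4) erefl).
rewrite subrr mulr0 !addr0 subr0 => /eqP.
by rewrite mulf_eq0 (negbTE two_neq0) => /eqP.
Qed.

(* sum_k H_k^3/k = 0, by telescoping g(k) = H_k^4. *)
Lemma sum_Hs1_cube_recip : \sum_(i < n) Hs 1 i.+1 ^+ 3 * recip i.+1 = 0.
Proof.
have := @sum_increments_eq0 (fun k => Hs 1 k ^+ 4).
rewrite /= (Hs_full_eq0 (m := 1) erefl) Hs0 exprS mul0r => /(_ erefl erefl).
rewrite (eq_bigr (fun i : 'I_n => 4%:R * (Hs 1 i.+1 ^+ 3 * recip i.+1)
   - 6%:R * (Hs 1 i.+1 ^+ 2 * recip i.+1 ^+ 2)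
   + 4%:R * (Hs 1 i.+1 * recip i.+1 ^+ 3) - recip i.+1 ^+ 4)) => [|i _]; last first.
  by rewrite !HsS; ring.
rewrite !big_split /= !sumrN -!mulr_sumr sum_Hs1_sq_recip_sq.
rewrite (sum_Hs_recip_eq0 (m := 1) (r := 3) erefl erefl).
rewrite -[\sum_(i < n) _ ^+ 4]/(Hs 4 n) (Hs_full_eq0 (m := 4) erefl).
rewrite !mulr0 !subr0 addr0 => /eqP.
have four_neq0 : 4%:R != 0 :> F by rewrite natr_neq0 //; lia.
by rewrite mulf_eq0 (negbTE four_neq0) => /eqP.
Qed.

End CharacteristicP.
End HarmonicNumbers.

Section ResidueModP.
Variables (F : fieldType) (p : nat).
Hypothesis pcharF : p \in [pchar F].

Lemma intr_eq0_pchar (z : int) : (z%:~R == 0 :> F) = (p %| z)%Z.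
Proof.
rewrite dvdzE; case: z => k; first by rewrite -(dvdn_pcharf pcharF).
by rewrite NegzE intrN oppr_eq0 -(dvdn_pcharf pcharF).
Qed.

Lemma ndvdz_mul (v w : int) : ~~ (p %| v)%Z -> ~~ (p %| w)%Z -> ~~ (p %| v * w)%Z.
Proof. by rewrite !dvdzE abszM Euclid_dvdM ?(pcharf_prime pcharF) // negb_or => -> ->. Qed.

(* A fraction u/v with p not dividing v is p-integral: its reduced
   denominator divides v. *)
Lemma p_integral_frac (u v : int) : ~~ (p %| v)%Z -> p_integral p (u%:~R / v%:~R).
Proof.
move=> p_ndvd_v; set x := u%:~R / v%:~R.
have v_neq0 : v%:~R != 0 :> rat.
  by rewrite intr_eq0; apply: contraNneq p_ndvd_v => ->; rewrite dvdz0.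
have cross : u * denq x = numq x * v.
  have den_neq0 : (denq x)%:~R != 0 :> rat by rewrite intr_eq0 denq_neq0.
  apply: (@intr_inj rat); rewrite !intrM; apply/eqP; rewrite -eqr_div //.
  by apply/eqP; symmetry; exact: divq_num_den.
move: p_ndvd_v; rewrite /p_integral; apply: contra; rewrite !dvdzE => p_dvd_den.
apply: (dvdn_trans p_dvd_den); rewrite -(@Gauss_dvdr _ `|numq x|).
  by rewrite -abszM -cross abszM dvdn_mull.
by rewrite coprime_sym coprime_num_den.
Qed.

Definition residue (x : rat) (y : F) : Prop :=
  exists u v : int, [/\ ~~ (p %| v)%Z, x = u%:~R / v%:~R & y = u%:~R / v%:~R].

Lemma residue_int (z : int) : residue z%:~R z%:~R.
Proof.
exists z, 1; rewrite !divr1; split=> //.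
by rewrite dvdzE Euclid_dvd1 // (pcharf_prime pcharF).
Qed.

Lemma residue_add x x' y y' : residue x y -> residue x' y' -> residue (x + x') (y + y').
Proof.
move=> [u [v [p_v -> ->]]] [u' [v' [p_v' -> ->]]].
have [vF v'F] : v%:~R != 0 :> F /\ v'%:~R != 0 :> F by rewrite !intr_eq0_pchar.
have [vQ v'Q] : v%:~R != 0 :> rat /\ v'%:~R != 0 :> rat.
  by rewrite !intr_eq0; split; [apply: contraNneq p_v | apply: contraNneq p_v'] => ->;
     rewrite dvdz0.
exists (u * v' + u' * v), (v * v'); split; first exact: ndvdz_mul.
  by rewrite intrD !intrM; field; rewrite vQ v'Q.
by rewrite intrD !intrM; field; rewrite vF v'F.
Qed.

Lemma residue_mul x x' y y' : residue x y -> residue x' y' -> residue (x * x') (y * y').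
Proof.
move=> [u [v [p_v -> ->]]] [u' [v' [p_v' -> ->]]].
exists (u * u'), (v * v'); split; first exact: ndvdz_mul.
  by rewrite !intrM mulf_div.
by rewrite !intrM mulf_div.
Qed.

Lemma residue_inv x y : residue x y -> y != 0 -> residue x^-1 y^-1.
Proof.
move=> [u [v [p_v -> ->]]] y_neq0; exists v, u; rewrite !invf_div; split=> //.
by rewrite -intr_eq0_pchar; apply: contra y_neq0 => /eqP ->; rewrite mul0r.
Qed.

Lemma residue_exp x y m : residue x y -> residue (x ^+ m) (y ^+ m).
Proof.
move=> xy; elim: m => [|m IH]; first exact: (residue_int 1).
by rewrite !exprS; apply: residue_mul.
Qed.

Lemma residue_sum (I : eqType) (r : seq I) (f : I -> rat) (g : I -> F) :
  (forall i, i \in r -> residue (f i) (g i)) ->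
  residue (\sum_(i <- r) f i) (\sum_(i <- r) g i).
Proof.
move=> fg; rewrite big_seq [X in residue _ X]big_seq.
apply: (big_ind2 residue); [exact: (residue_int 0) | | exact: fg].
by move=> x y x' y'; apply: residue_add.
Qed.

Lemma residue_cong0 x : residue x 0 -> cong_rat p x 0.
Proof.
move=> [u [v [p_v -> /esym/eqP]]].
have vF : v%:~R != 0 :> F by rewrite intr_eq0_pchar.
rewrite mulf_eq0 invr_eq0 (negbTE vF) orbF intr_eq0_pchar => p_u.
split; first exact: p_integral_frac.
split; first by rewrite /p_integral (denq_int 0) dvdzE Euclid_dvd1 // (pcharf_prime pcharF).
exists ((u %/ p)%Z%:~R / v%:~R); split; first exact: p_integral_frac.
by rewrite subr0 -{1}(divzK p_u) intrM mulrA [_ * p%:~R]mulrC.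
Qed.

Lemma residue_recip k : (0 < k < p)%N -> residue k%:R^-1 (recip F k).
Proof.
case/andP=> k_gt0 lt_kp; apply: residue_inv; first exact: (residue_int k).
by rewrite -(dvdn_pcharf pcharF) gtnNdvd.
Qed.

Lemma residue_Hgen m k : (k < p)%N -> residue (Hgen k m) (Hs F m k).
Proof.
move=> lt_kp; rewrite /Hgen big_add1 /= big_mkord.
apply: residue_sum => i _; rewrite -exprVn; apply/residue_exp/residue_recip.
by have := ltn_ord i; lia.
Qed.

Lemma residue_sum_range (f : nat -> rat) (g : nat -> F) :
  (forall k, (0 < k < p)%N -> residue (f k) (g k)) ->
  residue (\sum_(1 <= k < p) f k) (\sum_(i < p.-1) g i.+1).
Proof.
move=> fg; rewrite big_add1 /= big_mkord.
by apply: residue_sum => i _; apply: fg; have := ltn_ord i; lia.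
Qed.

End ResidueModP.

Theorem lemma2p9 (p : nat) (hp : prime p) (h7 : (7 <= p)%N) :
  cong_rat p (\sum_(1 <= k < p) H k ^+ 2 / k%:R ^+ 2) 0 /\
  cong_rat p (\sum_(1 <= k < p) H k * Hgen k 2 / k%:R) 0 /\
  cong_rat p (\sum_(1 <= k < p) H k ^+ 3 / k%:R) 0.
Proof.
have pchar := pchar_Fp hp.
have pchar' : p.-1.+1 \in [pchar 'F_p] by rewrite prednK ?prime_gt0.
have n_ge6 : (6 <= p.-1)%N by lia.
have resH k : (k < p)%N -> residue p (H k) (Hs 'F_p 1 k) := @residue_Hgen _ _ pchar 1 k.
have resR k : (0 < k < p)%N -> residue p k%:R^-1 (recip 'F_p k) := @residue_recip _ _ pchar k.
split; [|split]; apply: (residue_cong0 pchar).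
- rewrite -(sum_Hs1_sq_recip_sq pchar' n_ge6).
  apply: (residue_sum_range pchar (g := fun k => Hs _ 1 k ^+ 2 * recip _ k ^+ 2)).
  move=> k hk; have lt_kp := proj2 (andP hk); rewrite -exprVn.
  by apply: (residue_mul pchar); apply: (residue_exp pchar); [exact: resH | exact: resR].
- rewrite -(sum_Hs1_Hs2_recip pchar' n_ge6).
  apply: (residue_sum_range pchar (g := fun k => Hs _ 1 k * Hs _ 2 k * recip _ k)).
  move=> k hk; have lt_kp := proj2 (andP hk).
  apply: (residue_mul pchar); last exact: resR.
  by apply: (residue_mul pchar); [exact: resH | exact: (residue_Hgen pchar)].
- rewrite -(sum_Hs1_cube_recip pchar' n_ge6).
  apply: (residue_sum_range pchar (g := fun k => Hs _ 1 k ^+ 3 * recip _ k)).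
  move=> k hk; have lt_kp := proj2 (andP hk).
  apply: (residue_mul pchar); last exact: resR.
  by apply: (residue_exp pchar); exact: resH.
Qed.
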